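(* $\mathfrak{L}(\mathrm{rtDVA}(1))\subsetneq\mathfrak{L}(\mathrm{rtDVA}(2))$.
   Context: $\mathfrak{L}(A)$ denotes the class of languages recognized by machines of type $A$. A real-time deterministic vector automaton of dimension $k$ ($\mathrm{rtDVA}(k)$) is a 6-tuple $(Q,\Sigma,\delta,q_0,Q_a,v)$ with finite state set $Q$, initial state $q_0$, accept states $Q_a$, initial row vector $v\in\mathbb{Q}^k$ (freely chosen), and $\delta:Q\times(\Sigma\cup\{\cent,\$\})\times\{=,\neq\}\to Q\times S$, $S$ the set of $k\times k$ rational matrices. The input $w$ is read as $\cent w\$$ left to right, one symbol per step; in state $q$ reading $\sigma$, with $\omega$ equal to ''$=$'' iff the first vector entry equals $1$, if $\delta(q,\sigma,\omega)=(q',M)$ the machine goes to $q'$ and multiplies its row vector on the right by $M$. Acceptance: after processing $\$$, the state is in $Q_a$ and the first vector entry equals $1$. *)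

From HB Require Import structures.
From mathcomp Require Import all_boot all_order all_algebra.
Set Implicit Arguments. Unset Strict Implicit. Unset Printing Implicit Defensive.
Import Order.TTheory GRing.Theory Num.Theory.
Local Open Scope ring_scope.

Inductive tsym (Sigma : Type) : Type :=
| Cent : tsym Sigma
| Dollar : tsym Sigma
| Sym : Sigma -> tsym Sigma.
Arguments Cent {Sigma}. Arguments Dollar {Sigma}.

Definition first_entry (k : nat) : 'rV[rat]_k -> rat :=
  match k return 'rV[rat]_k -> rat with
  | 0 => fun _ => 0
  | n.+1 => fun v => v ord0 ord0
  end.

(* Real-time deterministic vector automaton of dimension k over alphabet Sigma.
   delta q sigma b : b = true  iff  the first vector entry equals 1 ("=").  *)
Record rtDVA (k : nat) (Sigma : finType) := RtDVA {
  dva_Q : finType;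
  dva_delta : dva_Q -> tsym Sigma -> bool -> dva_Q * 'M[rat]_k;
  dva_q0 : dva_Q;
  dva_Qa : {set dva_Q};
  dva_v : 'rV[rat]_k
}.
Arguments dva_Q {k Sigma} _.
Arguments dva_delta {k Sigma} _ _ _ _.
Arguments dva_q0 {k Sigma} _.
Arguments dva_Qa {k Sigma} _.
Arguments dva_v {k Sigma} _.

Definition dva_step (k : nat) (Sigma : finType) (M : rtDVA k Sigma)
  (c : dva_Q M * 'rV[rat]_k) (s : tsym Sigma) : dva_Q M * 'rV[rat]_k :=
  let: (q, v) := c in
  let: (q', Mx) := dva_delta M q s (first_entry v == 1) in
  (q', v *m Mx).

Definition dva_tape (Sigma : finType) (w : seq Sigma) : seq (tsym Sigma) :=
  Cent :: rcons (map (@Sym Sigma) w) Dollar.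

Definition dva_run (k : nat) (Sigma : finType) (M : rtDVA k Sigma) (w : seq Sigma)
  : dva_Q M * 'rV[rat]_k :=
  foldl (@dva_step k Sigma M) (dva_q0 M, dva_v M) (dva_tape w).

Definition dva_accepts (k : nat) (Sigma : finType) (M : rtDVA k Sigma) (w : seq Sigma)
  : bool :=
  let: (q, v) := dva_run M w in (q \in dva_Qa M) && (first_entry v == 1).

Definition rtDVA_lang (k : nat) (Sigma : finType) (L : seq Sigma -> Prop) : Prop :=
  exists M : rtDVA k Sigma, forall w, L w <-> dva_accepts M w.

(* Dimension 2 simulates dimension 1 by carrying a constant 1 in the second
   entry, and the same trick gives an affine counter: the language of binary
   words with unequally many ones and zeros is recognized in dimension 2.
   In dimension 1 the last step multiplies the scalar by a factor depending only
   on the state and on the "=" flag, so an accepting configuration is determined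
   by that pair.  The prefixes 1^(n+1) are all accepted, hence two of them, of
   different lengths, reach the same configuration; appending a block of zeros
   balancing one of them separates them. *)
From mathcomp Require Import all_boot all_order all_algebra.
From mathcomp Require Import ring.
Set Implicit Arguments. Unset Strict Implicit. Unset Printing Implicit Defensive.
Import Order.TTheory GRing.Theory Num.Theory.
Local Open Scope ring_scope.

Lemma foldl_morph (A B C : Type) (f : A -> B) (stepA : A -> C -> A)
    (stepB : B -> C -> B) :
  (forall a c, f (stepA a c) = stepB (f a) c) ->
  forall s a, f (foldl stepA a s) = foldl stepB (f a) s.
Proof. by move=> fstep; elim=> [|c s IHs] a //=; rewrite IHs fstep. Qed.

Lemma exists_neq_eq_nat (T : finType) (f : nat -> T) :
  exists i j, i != j /\ f i = f j.
Proof.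
pose g (i : 'I_#|T|.+1) := f i.
have /injectivePn[i [j neq_ij eq_g]] : ~~ injectiveb g.
  by apply/injectiveP => /leq_card; rewrite card_ord ltnn.
by exists (val i), (val j).
Qed.

Section Configurations.
Variables (k : nat) (Sigma : finType) (M : rtDVA k Sigma).

Definition dva_config (w : seq Sigma) : dva_Q M * 'rV[rat]_k :=
  foldl (dva_step (M := M)) (dva_step (M := M) (dva_q0 M, dva_v M) Cent)
        (map (@Sym Sigma) w).

Definition dva_final (c : dva_Q M * 'rV[rat]_k) : bool :=
  let: (q, v) := dva_step (M := M) c Dollar in (q \in dva_Qa M) && (first_entry v == 1).

Lemma dva_acceptsE w : dva_accepts M w = dva_final (dva_config w).
Proof.
rewrite /dva_accepts /dva_run /dva_tape /= foldl_rcons /dva_final /dva_config.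
by case: (dva_step _ Dollar).
Qed.

Lemma dva_config_cat u s :
  dva_config (u ++ s) = foldl (dva_step (M := M)) (dva_config u) (map (@Sym Sigma) s).
Proof. by rewrite /dva_config map_cat foldl_cat. Qed.

End Configurations.

Definition affine_row (c : rat) : 'rV[rat]_2 :=
  \row_(j < 2) (if j == ord0 then c else 1).

Definition affine_mx (a d : rat) : 'M[rat]_2 :=
  \matrix_(i < 2, j < 2)
    (if j == ord0 then (if i == ord0 then a else d) else (if i == ord0 then 0 else 1)).

Lemma affine_rowM c a d : affine_row c *m affine_mx a d = affine_row (c * a + d).
Proof.
apply/rowP => j; rewrite !mxE big_ord_recr big_ord1 /= !mxE.
by case: (j == ord0); rewrite /= ?mulr0 ?add0r ?mulr1 ?mul1r.
Qed.

Lemma first_entry_affine_row c : first_entry (affine_row c) = c.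
Proof. by rewrite /= mxE. Qed.

Section OneInTwo.
Variables (Sigma : finType) (M : rtDVA 1 Sigma).

Definition rtDVA_lift : rtDVA 2 Sigma :=
  RtDVA (fun q s b => let: (q', m) := dva_delta M q s b in
                      (q', affine_mx (m ord0 ord0) 0))
        (dva_q0 M) (dva_Qa M) (affine_row (dva_v M ord0 ord0)).

Definition lift_config (c : dva_Q M * 'rV[rat]_1) : dva_Q M * 'rV[rat]_2 :=
  (c.1, affine_row (c.2 ord0 ord0)).

Lemma dva_step_lift c s :
  lift_config (dva_step (M := M) c s) = dva_step (M := rtDVA_lift) (lift_config c) s.
Proof.
case: c => q v; rewrite /dva_step /= mxE eqxx.
case: (dva_delta M q s _) => q' m.
by rewrite /lift_config affine_rowM addr0 mxE big_ord1.
Qed.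

Lemma dva_accepts_lift w : dva_accepts rtDVA_lift w = dva_accepts M w.
Proof.
rewrite /dva_accepts /dva_run.
have <- : lift_config (dva_q0 M, dva_v M) = (dva_q0 rtDVA_lift, dva_v rtDVA_lift) by [].
rewrite -(foldl_morph dva_step_lift); case: (foldl _ _ _) => q v.
by rewrite /= mxE.
Qed.

End OneInTwo.

Lemma rtDVA_lang1_2 (Sigma : finType) (L : seq Sigma -> Prop) :
  rtDVA_lang 1 L -> rtDVA_lang 2 L.
Proof.
by case=> M ML; exists (rtDVA_lift M) => w; rewrite dva_accepts_lift.
Qed.

Section OneDimensional.
Variables (Sigma : finType) (M : rtDVA 1 Sigma).

Definition config_key (c : dva_Q M * 'rV[rat]_1) : dva_Q M * bool :=
  (c.1, first_entry c.2 == 1).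

Lemma dva_final1_inj c c' :
  dva_final c -> dva_final c' -> config_key c = config_key c' -> c = c'.
Proof.
case: c c' => q y [q' y'] + + [eq_q eq_flag]; subst q'.
rewrite /dva_final /dva_step /= eq_flag.
case: (dva_delta M q Dollar _) => q2 m /andP[_ /eqP ym1] /andP[_ /eqP y'm1].
rewrite !mxE !big_ord1 in ym1 y'm1.
have m_neq0 : m ord0 ord0 != 0.
  by apply: contra_eq_neq ym1 => ->; rewrite mulr0.
congr (_, _); apply/rowP => j; rewrite (ord1 j).
by apply: (mulIf m_neq0); rewrite ym1 y'm1.
Qed.

Lemma dva_accepts1_cat u v s :
  dva_accepts M u -> dva_accepts M v ->
  config_key (dva_config M u) = config_key (dva_config M v) ->
  dva_accepts M (u ++ s) = dva_accepts M (v ++ s).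
Proof.
rewrite !dva_acceptsE !dva_config_cat => Fu Fv eq_key.
by rewrite (dva_final1_inj Fu Fv eq_key).
Qed.

End OneDimensional.

Definition unbalanced (w : seq bool) : Prop := count id w != count negb w.

Definition unbalanced_dva : rtDVA 2 bool :=
  RtDVA (fun (_ : unit) s flag => match s with
           | Cent => (tt, affine_mx 1 0)
           | Sym true => (tt, affine_mx 1 1)
           | Sym false => (tt, affine_mx 1 (-1))
           | Dollar => (tt, if flag then affine_mx 0 0 else affine_mx 0 1)
           end)
        tt [set: unit] (affine_row 1).

Lemma unbalanced_dva_Sym b c :
  dva_step (M := unbalanced_dva) (tt, affine_row c) (Sym b) =
  (tt, affine_row (c + (if b then 1 else -1))).
Proof. by case: b; rewrite /dva_step /= affine_rowM mulr1. Qed.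

Lemma unbalanced_dva_count w c :
  foldl (dva_step (M := unbalanced_dva)) (tt, affine_row c) (map (@Sym bool) w) =
  (tt, affine_row (c + (count id w)%:R - (count negb w)%:R)).
Proof.
elim: w c => [|b w IHw] c; first by rewrite /= subr0 addr0.
rewrite -[LHS]/(foldl _ (dva_step (M := unbalanced_dva) (tt, affine_row c) (Sym b))
                      (map (@Sym bool) w)).
rewrite unbalanced_dva_Sym IHw /= !natrD.
by case: b; congr (_, affine_row _); rewrite /=; ring.
Qed.

Lemma rtDVA_lang2_unbalanced : rtDVA_lang 2 unbalanced.
Proof.
exists unbalanced_dva => w; rewrite dva_acceptsE /dva_config.
have -> : dva_step (M := unbalanced_dva) (tt, affine_row 1) Cent = (tt, affine_row 1).
  by rewrite /dva_step /= affine_rowM mulr1 addr0.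
have balancedE : (1 + (count id w)%:R - (count negb w)%:R == 1 :> rat) =
                 (count id w == count negb w).
  by rewrite -addrA -[X in _ == X]addr0 (inj_eq (addrI 1)) subr_eq0 eqr_nat.
rewrite unbalanced_dva_count /dva_final /dva_step first_entry_affine_row /=.
rewrite balancedE /unbalanced.
by case: eqP; rewrite affine_rowM mxE /= mulr0 ?addr0 ?add0r in_setT.
Qed.

Lemma count_ones_zeros m n :
  count id (nseq m true ++ nseq n false) = m /\
  count negb (nseq m true ++ nseq n false) = n.
Proof. by split; rewrite count_cat !count_nseq /= ?mul1n ?mul0n ?addn0. Qed.

Lemma not_rtDVA_lang1_unbalanced : ~ rtDVA_lang 1 unbalanced.
Proof.
case=> M ML.
have ones_acc n : dva_accepts M (nseq n.+1 true).
  by apply/ML; rewrite /unbalanced !count_nseq.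
have [i [j [neq_ij eq_key]]] :=
  exists_neq_eq_nat (fun n => config_key (dva_config M (nseq n.+1 true))).
have [ones_i zeros_i] := count_ones_zeros i.+1 i.+1.
have [ones_j zeros_j] := count_ones_zeros j.+1 i.+1.
have := dva_accepts1_cat (nseq i.+1 false) (ones_acc i) (ones_acc j) eq_key.
have -> : dva_accepts M (nseq j.+1 true ++ nseq i.+1 false).
  by apply/ML; rewrite /unbalanced ones_j zeros_j eqSS eq_sym.
by move=> /(proj2 (ML _)); rewrite /unbalanced ones_i zeros_i eqxx.
Qed.

Theorem corollary1 :
  (forall (Sigma : finType) (L : seq Sigma -> Prop),
      rtDVA_lang 1 L -> rtDVA_lang 2 L) /\
  (exists (Sigma : finType) (L : seq Sigma -> Prop),
      rtDVA_lang 2 L /\ ~ rtDVA_lang 1 L).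
Proof.
split; first exact: rtDVA_lang1_2.
exists bool, unbalanced.
split; [exact: rtDVA_lang2_unbalanced | exact: not_rtDVA_lang1_unbalanced].
Qed.
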